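(* Let $m\ge1$, let $R_-,R_+\subset\mathbb Z$ be disjoint arithmetic progressions with common difference $m$ with $|R_-|+|R_+|=d$ and $\min(R_-\cup R_+)=0$, and let $T_{long}=T_{I,R}$ be the associated long-diagonal pentagram map in $\mathbb{RP}^d$. Define $$J_\pm=\{\max R_\pm,\ \max R_\pm+m,\ \dots,\ \min R_\pm+m(d-1)\}=\bigcap_{r\in R_\pm}\{r,r+m,\dots,r+m(d-1)\}.$$ Then $|J_-|+|J_+|=d+2$, and for a generic twisted $n$-gon $\{v_k\}$ in $\mathbb{RP}^d$ one has, for every $k$, $$\bigcap_{r\in R_\pm}P_{k+r}=\mathrm{span}\{v_{k+j}:j\in J_\pm\},\qquad \hat v_k=\mathrm{span}\{v_{k+j}:j\in J_-\}\cap\mathrm{span}\{v_{k+j}:j\in J_+\}.$$ Moreover $J_-$ and $J_+$ are disjoint, except in the case $R_-=\{0,m,\dots,km\}$, $R_+=\{(k+1)m,\dots,(d-1)m\}$ (or the same with $R_-$ and $R_+$ swapped), in which $T_{I,R}$ is the identity map up to a shift of indices.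
   Context: For $(d-1)$-tuples of positive integers $I=(i_1,\dots,i_{d-1})$ and $R=(r_1,\dots,r_{d-1})$ and a twisted $n$-gon $\{v_k\}$ in $\mathbb{RP}^d$ (a sequence with $v_{k+n}=M(v_k)$ for a fixed projective transformation $M$), define the diagonal hyperplanes $P_k=\mathrm{span}\langle v_k,v_{k+i_1},\dots,v_{k+i_1+\dots+i_{d-1}}\rangle$ and the map $T_{I,R}$ by $\hat v_k=P_k\cap P_{k+r_1}\cap\dots\cap P_{k+r_1+\dots+r_{d-1}}$. A long-diagonal pentagram map is $T_{I,R}$ where $I=(m,\dots,m)$ and $R$ is the sequence of differences between consecutive elements of $R_-\cup R_+$ (in increasing order), for two disjoint arithmetic progressions $R_-,R_+$ with common difference $m$ and $d$ elements in total. *)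

(* projective space RP^d is modelled by nonzero row vectors of
   'rV[K]_(d.+1) over a real field K; projective subspaces are vector subspaces
   ({vspace _}) of K^(d+1). *)
From HB Require Import structures.
From mathcomp Require Import all_boot all_order all_algebra.
Set Implicit Arguments. Unset Strict Implicit. Unset Printing Implicit Defensive.
Import Order.TTheory GRing.Theory Num.Theory.
Local Open Scope ring_scope.

Definition psums (s : seq int) : seq int := 0 :: scanl +%R 0 s.

Definition diagP (K : fieldType) (d : nat) (v : int -> 'rV[K]_d.+1)
    (I : seq int) (k : int) : {vspace 'rV[K]_d.+1} :=
  <<[seq v (k + j)%R | j <- psums I]>>%VS.

Definition hatv (K : fieldType) (d : nat) (v : int -> 'rV[K]_d.+1)
    (I R : seq int) (k : int) : {vspace 'rV[K]_d.+1} :=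
  (\bigcap_(j <- psums R) diagP v I (k + j)%R)%VS.

Definition twisted_ngon (K : fieldType) (d n : nat) (v : int -> 'rV[K]_d.+1) :=
  (forall k, v k != 0) /\
  exists2 M : 'M[K]_d.+1, M \in unitmx &
    forall k, <[v (k + n%:Z)%R]>%VS = <[v k *m M]>%VS.

Definition general_position (K : fieldType) (d : nat) (v : int -> 'rV[K]_d.+1) :=
  forall ks : seq int, uniq ks -> size ks = d.+1 -> free [seq v k | k <- ks].

Definition aprog (a : int) (m p : nat) : seq int :=
  [seq a + (i * m)%:Z | i <- iota 0 p].

(* J = \bigcap_{r in R} {r, r+m, ..., r+m(d-1)} (R nonempty) *)
Definition Jset (R : seq int) (m d : nat) : seq int :=
  undup [seq j <- aprog (head 0 R) m d | all (fun r => j \in aprog r m d) R].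

Definition longI (m d : nat) : seq int := nseq d.-1 (m%:Z).
Definition longR (Rs : seq int) : seq int :=
  let s := sort (fun x y : int => x <= y) Rs in
  pairmap (fun x y => y - x) (head 0 s) (behead s).

Definition exceptional (Rm Rp : seq int) (m d : nat) : Prop :=
  exists q : nat, (q.+2 <= d)%N /\
    ((Rm =i aprog 0 m q.+1 /\ Rp =i aprog (q.+1 * m)%:Z m (d - q.+1)) \/
     (Rp =i aprog 0 m q.+1 /\ Rm =i aprog (q.+1 * m)%:Z m (d - q.+1))).

(* A hyperplane P_{k+r} of the long-diagonal map is spanned by the d vertices
   v_{k+r}, v_{k+r+m}, ..., v_{k+r+(d-1)m}, a window of the progression k+r+mZ.  For a
   free family, the spans of two overlapping windows meet exactly in the span of their
   overlap, so the hyperplanes indexed by an arithmetic progression R of common difference m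
   intersect in the span of the common window J, which has d - |R| + 1 vertices; this gives
   |J_-| + |J_+| = d + 2.  The partial sums of the long-diagonal R-tuple enumerate
   R_- \cup R_+ (its minimum is 0), so hat v_k is the intersection of the two spans.  If J_-
   and J_+ share an index, r_- + im = r_+ + i'm with both indices in the windows; then one
   progression continues the other, and the normalisation min = 0 forces the exceptional
   configuration, in which the two windows share exactly one vertex. *)

From HB Require Import structures.
From mathcomp Require Import all_boot all_order all_algebra.
From mathcomp Require Import zify ring.
Import Order.TTheory GRing.Theory Num.Theory.
Local Open Scope ring_scope.
Set Implicit Arguments. Unset Strict Implicit. Unset Printing Implicit Defensive.

Section WindowSpans.
Variables (K : fieldType) (vT : vectType K).

Lemma capv_span_cat (X Y Z : seq vT) : free (X ++ Y ++ Z) ->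
  (<<X ++ Y>> :&: <<Y ++ Z>> = <<Y>>)%VS.
Proof.
move=> freeXYZ.
have freeXY : free (X ++ Y) by move: freeXYZ; rewrite catA; apply: catl_free.
have freeYZ : free (Y ++ Z) by apply: catr_free freeXYZ.
have freeY : free Y by apply: catl_free freeYZ.
have sumXYZ : (<<X ++ Y>> + <<Y ++ Z>> = <<X ++ Y ++ Z>>)%VS.
  rewrite -span_cat; apply: eq_span => u; rewrite !mem_cat.
  by case: (u \in X); case: (u \in Y).
have := dimv_sum_cap <<X ++ Y>>%VS <<Y ++ Z>>%VS.
rewrite sumXYZ (eqP freeXYZ) (eqP freeXY) (eqP freeYZ) !size_cat => dim_cap.
apply/eqP; rewrite eq_sym eqEdim subv_cap !sub_span /= => [|u|u]; last 2 first.
- by rewrite mem_cat => ->; rewrite ?orbT.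
- by rewrite mem_cat => ->; rewrite ?orbT.
by rewrite (eqP freeY); lia.
Qed.

Variable w : nat -> vT.

Lemma capv_span_iotaD (a x y z : nat) : free (map w (iota a (x + y + z))) ->
  (<<map w (iota a (x + y))>> :&: <<map w (iota (a + x) (y + z))>> =
   <<map w (iota (a + x) y)>>)%VS.
Proof.
move=> free_w; rewrite !iotaD !map_cat; apply: capv_span_cat.
by rewrite -!map_cat -!iotaD addnA.
Qed.

Lemma bigcapv_span_iota (d l i0 : nat) : (0 < l <= d)%N ->
  (forall i, free (map w (iota i d.+1))) ->
  (\bigcap_(i <- iota i0 l) <<map w (iota i d)>> =
   <<map w (iota (i0 + l.-1) (d - l.-1))>>)%VS.
Proof.
case: l => // l /andP [_ lt_ld] free_w.
elim: l i0 lt_ld => [|l IHl] i0 lt_ld; first by rewrite big_seq1 addn0 subn0.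
rewrite /= big_cons -/(iota i0.+1 l.+1) IHl /=; last by lia.
have -> : (i0.+1 + l = i0 + l.+1)%N by lia.
have {1}-> : d = (l.+1 + (d - l.+1))%N by lia.
have -> : (d - l = (d - l.+1) + 1)%N by lia.
rewrite capv_span_iotaD //.
by have -> : (l.+1 + (d - l.+1) + 1 = d.+1)%N by lia.
Qed.

End WindowSpans.

Section ArithmeticProgressions.
Variables (m : nat) (m_gt0 : (0 < m)%N).

Lemma aprog_term_inj (a : int) : injective (fun i : nat => a + (i * m)%:Z).
Proof. by move=> i j /addrI [] /eqP; rewrite eqn_pmul2r // => /eqP. Qed.

Lemma uniq_aprog (a : int) (p : nat) : uniq (aprog a m p).
Proof. by rewrite map_inj_uniq ?iota_uniq //; apply: aprog_term_inj. Qed.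

Lemma mem_aprogP (a x : int) (p : nat) :
  reflect (exists2 t, (t < p)%N & x = a + (t * m)%:Z) (x \in aprog a m p).
Proof.
by apply: (iffP mapP) => [] [t tp ->]; exists t; rewrite ?mem_iota in tp *.
Qed.

Lemma aprog_head_mem (a : int) (p : nat) : (0 < p)%N -> a \in aprog a m p.
Proof. by move=> p_gt0; apply/mem_aprogP; exists 0%N; rewrite ?mul0n ?addr0. Qed.

Lemma mem_aprog_offset (a : int) (i i' p : nat) :
  (a + (i * m)%:Z \in aprog (a + (i' * m)%:Z) m p) = (i' <= i < i' + p)%N.
Proof.
apply/mem_aprogP/idP => [[t tp]|i_in].
  rewrite -addrA -PoszD -mulnDl => /aprog_term_inj ->; lia.
exists (i - i')%N; first lia.
by rewrite -addrA -PoszD -mulnDl subnKC //; lia.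
Qed.

Lemma eq_mem_aprog (a b : int) (p p' : nat) : (0 < p)%N -> (0 < p')%N ->
  aprog a m p =i aprog b m p' -> a = b /\ p = p'.
Proof.
move=> p_gt0 p'_gt0 eq_ab; split.
  have /mem_aprogP [t _ def_a] : a \in aprog b m p' by rewrite -eq_ab aprog_head_mem.
  have /mem_aprogP [t' _ def_b] : b \in aprog a m p by rewrite eq_ab aprog_head_mem.
  lia.
have := perm_size (uniq_perm (uniq_aprog a p) (uniq_aprog b p') eq_ab).
by rewrite !size_map !size_iota.
Qed.

Lemma Jset_aprog (a : int) (p d : nat) : (0 < p <= d)%N ->
  Jset (aprog a m p) m d = [seq a + (i * m)%:Z | i <- iota p.-1 (d - p.-1)].
Proof.
case/andP=> p_gt0 le_pd; rewrite /Jset.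
have -> : head 0 (aprog a m p) = a by case: p p_gt0 {le_pd} => // p _; rewrite /= addr0.
rewrite {1}/aprog filter_map undup_id; last first.
  by rewrite map_inj_uniq ?filter_uniq ?iota_uniq //; apply: aprog_term_inj.
congr map; rewrite -(eq_in_filter (a1 := fun i => (p.-1 <= i)%N)); last first.
  move=> i; rewrite mem_iota /= => i_lt_d; rewrite /aprog all_map.
  apply/idP/allP => [le_pi t|all_t].
    by rewrite mem_iota /= mem_aprog_offset; lia.
  by move: (all_t p.-1); rewrite mem_iota /= mem_aprog_offset; lia.
have -> : d = (p.-1 + (d - p.-1))%N by lia.
rewrite iotaD filter_cat add0n addKn.
rewrite (eq_in_filter (a2 := pred0)) ?filter_pred0 => [|i]; last first.
  by rewrite mem_iota /=; lia.
by rewrite (eq_in_filter (a2 := predT)) ?filter_predT // => i; rewrite mem_iota => /andP [].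
Qed.

Lemma size_Jset_aprog (a : int) (p d : nat) : (0 < p <= d)%N ->
  size (Jset (aprog a m p) m d) = (d - p.-1)%N.
Proof. by move=> /Jset_aprog ->; rewrite size_map size_iota. Qed.

End ArithmeticProgressions.

Lemma scanl_add_nseq (c : int) (m n : nat) :
  scanl +%R c (nseq n m%:Z) = [seq c + (i.+1 * m)%:Z | i <- iota 0 n].
Proof.
elim: n c => [//|n IHn] c /=; rewrite IHn mul1n; congr cons.
rewrite (iotaDl 1 0) -map_comp; apply: eq_map => i /=.
by rewrite -addrA -PoszD -mulSn.
Qed.

Lemma psums_longI (m d : nat) : (0 < d)%N ->
  psums (longI m d) = [seq (i * m)%:Z | i <- iota 0 d].
Proof.
case: d => // d _; rewrite /psums /longI /= scanl_add_nseq (iotaDl 1 0) -map_comp.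
by congr cons; apply: eq_map => i /=; rewrite add0r.
Qed.

Lemma scanl_add_pairmap_sub (c x : int) (s : seq int) :
  scanl +%R c (pairmap (fun x y => y - x) x s) = [seq c + (y - x) | y <- s].
Proof.
elim: s c x => [//|y s IHs] c x /=; rewrite IHs; congr cons.
by apply: eq_map => z; rewrite -addrA; congr (_ + _); ring.
Qed.

Lemma psums_longR (s : seq int) : 0 \in s -> all (fun x => 0 <= x) s ->
  psums (longR s) = sort (fun x y : int => x <= y) s.
Proof.
move=> s0 s_ge0; rewrite /longR.
have : sorted (fun x y : int => x <= y) (sort (fun x y : int => x <= y) s).
  by apply: sort_sorted => x y; apply: le_total.
have : all (fun x => (0 <= x) && (x \in s)) (sort (fun x y : int => x <= y) s).
  by apply/allP => x; rewrite mem_sort => xs; rewrite xs andbT (allP s_ge0).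
have : 0 \in sort (fun x y : int => x <= y) s by rewrite mem_sort.
case: (sort _ s) => [//|h t] h0t /andP [/andP [h_ge0 _] _] sorted_ht.
have h_eq0 : h = 0.
  move: h0t; rewrite inE => /orP [/eqP -> //|/(allP (order_path_min le_trans sorted_ht))].
  by move=> h_le0; apply/eqP; rewrite eq_le h_le0.
rewrite /psums /= scanl_add_pairmap_sub h_eq0; congr cons.
by rewrite -[RHS]map_id; apply: eq_map => y; rewrite add0r subr0.
Qed.

Section LongDiagonals.
Variables (K : fieldType) (d m : nat) (v : int -> 'rV[K]_d.+1).
Hypotheses (m_gt0 : (0 < m)%N) (v_gen : general_position v).

Lemma free_aprog_window (b : int) (i : nat) :
  free (map (fun t : nat => v (b + (t * m)%:Z)) (iota i d.+1)).
Proof.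
rewrite (map_comp v (fun t : nat => b + (t * m)%:Z)); apply: v_gen.
- by rewrite map_inj_uniq ?iota_uniq //; apply: aprog_term_inj.
- by rewrite size_map size_iota.
Qed.

Lemma diagP_longI (b : int) (i : nat) : (0 < d)%N ->
  diagP v (longI m d) (b + (i * m)%:Z) =
  <<map (fun t : nat => v (b + (t * m)%:Z)) (iota i d)>>%VS.
Proof.
move=> d_gt0; have -> : iota i d = map (addn i) (iota 0 d) by rewrite -iotaDl addn0.
rewrite /diagP psums_longI // -!map_comp.
by congr span; apply: eq_map => t /=; rewrite mulnDl PoszD addrA.
Qed.

Lemma bigcap_diagP_aprog (a k : int) (p : nat) : (0 < p <= d)%N ->
  (\bigcap_(r <- aprog a m p) diagP v (longI m d) (k + r))%VS =
  <<[seq v (k + j) | j <- Jset (aprog a m p) m d]>>%VS.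
Proof.
move=> p_range; have d_gt0 : (0 < d)%N by lia.
rewrite /aprog big_map; under eq_bigr do rewrite addrA diagP_longI //.
rewrite bigcapv_span_iota //; last exact: free_aprog_window.
rewrite Jset_aprog // -map_comp add0n.
by congr span; apply: eq_map => t /=; rewrite addrA.
Qed.

Lemma hatv_longR_cat (Rm Rp : seq int) (k : int) :
  0 \in Rm ++ Rp -> all (fun x => 0 <= x) (Rm ++ Rp) ->
  hatv v (longI m d) (longR (Rm ++ Rp)) k =
  ((\bigcap_(r <- Rm) diagP v (longI m d) (k + r)) :&:
   (\bigcap_(r <- Rp) diagP v (longI m d) (k + r)))%VS.
Proof.
move=> R0 R_ge0; rewrite /hatv psums_longR //.
by rewrite (perm_big (Rm ++ Rp)) ?big_cat // perm_sort.
Qed.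

End LongDiagonals.

Section LongDiagonalExceptional.
Variables (K : fieldType) (d m q : nat) (v : int -> 'rV[K]_d.+1).
Hypotheses (m_gt0 : (0 < m)%N) (le_qd : (q.+2 <= d)%N).

Lemma exceptional_Jset_common :
  (d.-1 * m)%:Z \in Jset (aprog 0 m q.+1) m d /\
  (d.-1 * m)%:Z \in Jset (aprog (q.+1 * m)%:Z m (d - q.+1)) m d.
Proof.
rewrite !Jset_aprog //; try lia; split; apply/mapP.
  by exists d.-1; rewrite ?mem_iota ?add0r //; lia.
exists (d - q.+1).-1; first by rewrite mem_iota; lia.
by rewrite -PoszD -mulnDl; congr (Posz (_ * _)); lia.
Qed.

(* In units of m the windows are {q, ..., d-1} and {d-1, ..., d+q}: they share exactly d-1. *)
Lemma exceptional_Jset_capv (k : int) : general_position v ->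
  (<<[seq v (k + j) | j <- Jset (aprog 0 m q.+1) m d]>> :&:
   <<[seq v (k + j) | j <- Jset (aprog (q.+1 * m)%:Z m (d - q.+1)) m d]>>)%VS =
  <[v (k + (d.-1 * m)%:Z)]>%VS.
Proof.
move=> v_gen; rewrite !Jset_aprog //; try lia.
pose w (t : nat) := v (k + (t * m)%:Z).
have -> : [seq v (k + j) | j <- [seq 0 + (i * m)%:Z | i <- iota q.+1.-1 (d - q.+1.-1)]]
    = map w (iota q ((d.-1 - q) + 1)).
  rewrite -map_comp (_ : d - q.+1.-1 = (d.-1 - q) + 1)%N; last by lia.
  by apply: eq_map => i /=; rewrite add0r.
have -> : [seq v (k + j) | j <- [seq (q.+1 * m)%:Z + (i * m)%:Z
                                 | i <- iota (d - q.+1).-1 (d - (d - q.+1).-1)]]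
    = map w (iota (q + (d.-1 - q)) (1 + q.+1)).
  rewrite (_ : q + (d.-1 - q) = q.+1 + (d - q.+1).-1)%N; last by lia.
  rewrite (_ : d - (d - q.+1).-1 = 1 + q.+1)%N; last by lia.
  rewrite iotaDl -!map_comp; apply: eq_map => i /=.
  by rewrite /w mulnDl PoszD.
rewrite capv_span_iotaD /=; first by rewrite span_seq1 /w; congr (<[v (k + _)]>%VS); lia.
rewrite (_ : (d.-1 - q + 1 + q.+1 = d.+1)%N); last by lia.
exact: free_aprog_window.
Qed.

End LongDiagonalExceptional.

(* If am + i m = ap + i' m with both indices in the windows, then am - ap = (i' - i) m with
   i' - i <= pp, and disjointness of the progressions forces i' - i = pp. *)
Lemma Jset_meet_continuation (m pm pp : nat) (am ap : int) (i i' : nat) :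
  (0 < m)%N -> (0 < pp)%N ->
  (pm.-1 <= i <= i')%N -> (i' < pm + pp)%N -> am + (i * m)%:Z = ap + (i' * m)%:Z ->
  am \notin aprog ap m pp -> 0 <= ap -> 0 \in aprog am m pm ++ aprog ap m pp ->
  ap = 0 /\ am = (pp * m)%:Z.
Proof.
move=> m_gt0 pp_gt0 /andP [le_i le_ii'] lt_i'd eq_ii' am_notin ap_ge0.
have am_def : am = ap + ((i' - i) * m)%:Z.
  have : (i * m <= i' * m)%N by rewrite leq_mul2r le_ii' orbT.
  by rewrite mulnBl; lia.
have gap : (i' - i = pp)%N.
  case: (ltnP (i' - i) pp) => [lt_gap|]; last by lia.
  by case/negP: am_notin; apply/mem_aprogP; exists (i' - i)%N.
have ppm_gt0 : (0 < pp * m)%N by rewrite muln_gt0 pp_gt0.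
by rewrite am_def gap; rewrite mem_cat => /orP [] /mem_aprogP [t _]; lia.
Qed.

Section DisjointWindows.
Variables (m pm pp d : nat) (am ap : int).
Hypotheses (m_gt0 : (0 < m)%N) (pm_gt0 : (0 < pm)%N) (pp_gt0 : (0 < pp)%N).

Lemma Jset_meet_exceptional (j : int) : (pm + pp)%N = d ->
  all (fun x => x \notin aprog ap m pp) (aprog am m pm) ->
  0 \in aprog am m pm ++ aprog ap m pp ->
  all (fun x => 0 <= x) (aprog am m pm ++ aprog ap m pp) ->
  j \in Jset (aprog am m pm) m d -> j \in Jset (aprog ap m pp) m d ->
  exceptional (aprog am m pm) (aprog ap m pp) m d.
Proof.
move=> d_def disj R0 R_ge0; rewrite !Jset_aprog; try lia.
move=> /mapP [i]; rewrite mem_iota => i_range -> /mapP [i']; rewrite mem_iota => i'_range.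
have am_in : am \in aprog am m pm by apply: aprog_head_mem.
have ap_in : ap \in aprog ap m pp by apply: aprog_head_mem.
have ge0 x : x \in aprog am m pm ++ aprog ap m pp -> 0 <= x by move/(allP R_ge0).
case: (leqP i i') => [le_ii'|lt_i'i] eq_ii'.
- have [ap0 am_def] : ap = 0 /\ am = (pp * m)%:Z.
    apply: (@Jset_meet_continuation m pm pp am ap i i') => //; try lia.
    + exact: (allP disj).
    + by apply: ge0; rewrite mem_cat ap_in orbT.
  exists pp.-1; split; first lia.
  by right; rewrite prednK // ap0 am_def (_ : d - pp = pm)%N; last lia.
- have [am0 ap_def] : am = 0 /\ ap = (pm * m)%:Z.
    apply: (@Jset_meet_continuation m pp pm ap am i' i) => //; try lia.
    + by apply/negP => /(allP disj); rewrite ap_in.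
    + by apply: ge0; rewrite mem_cat am_in.
    + by move: R0; rewrite !mem_cat orbC.
  exists pm.-1; split; first lia.
  by left; rewrite prednK // am0 ap_def (_ : d - pm = pp)%N; last lia.
Qed.

Lemma exceptional_aprog :
  exceptional (aprog am m pm) (aprog ap m pp) m d ->
  exists2 q, (q.+2 <= d)%N &
    ((am, pm, ap, pp) = (0, q.+1, (q.+1 * m)%:Z, (d - q.+1)%N) \/
     (ap, pp, am, pm) = (0, q.+1, (q.+1 * m)%:Z, (d - q.+1)%N)).
Proof.
have lt_qd q : (q.+2 <= d)%N -> (0 < d - q.+1)%N by lia.
case=> q [le_qd [[Rm_def Rp_def]|[Rp_def Rm_def]]]; exists q => //.
- have [-> ->] := eq_mem_aprog m_gt0 pm_gt0 (ltn0Sn q) Rm_def.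
  by have [-> ->] := eq_mem_aprog m_gt0 pp_gt0 (lt_qd q le_qd) Rp_def; left.
- have [-> ->] := eq_mem_aprog m_gt0 pp_gt0 (ltn0Sn q) Rp_def.
  by have [-> ->] := eq_mem_aprog m_gt0 pm_gt0 (lt_qd q le_qd) Rm_def; right.
Qed.

End DisjointWindows.

Unset Implicit Arguments.

Theorem mainTheorem12 (K : realFieldType) (d m : nat)
    (am ap : int) (pm pp : nat) :
  (0 < m)%N -> (0 < pm)%N -> (0 < pp)%N -> (pm + pp)%N = d ->
  let Rm := aprog am m pm in
  let Rp := aprog ap m pp in
  all (fun x => x \notin Rp) Rm ->
  0 \in Rm ++ Rp -> all (fun x => 0 <= x) (Rm ++ Rp) ->
  let Jm := Jset Rm m d in
  let Jp := Jset Rp m d in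
  let I := longI m d in
  let Rt := longR (Rm ++ Rp) in
  (size Jm + size Jp)%N = d.+2 /\
  (forall (n : nat) (v : int -> 'rV[K]_d.+1),
     (0 < n)%N -> twisted_ngon n v -> general_position v ->
     forall k : int,
       (\bigcap_(r <- Rm) diagP v I (k + r)%R)%VS = <<[seq v (k + j)%R | j <- Jm]>>%VS /\
       (\bigcap_(r <- Rp) diagP v I (k + r)%R)%VS = <<[seq v (k + j)%R | j <- Jp]>>%VS /\
       hatv v I Rt k =
         (<<[seq v (k + j)%R | j <- Jm]>> :&: <<[seq v (k + j)%R | j <- Jp]>>)%VS) /\
  (~ exceptional Rm Rp m d -> forall j, j \in Jm -> j \notin Jp) /\
  (exceptional Rm Rp m d ->
     (exists j, j \in Jm /\ j \in Jp) /\
     exists s : int, forall (n : nat) (v : int -> 'rV[K]_d.+1),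
       (0 < n)%N -> twisted_ngon n v -> general_position v ->
       forall k : int, hatv v I Rt k = <[v (k + s)%R]>%VS).
Proof.
move=> m_gt0 pm_gt0 pp_gt0 d_def Rm Rp disj R0 R_ge0 Jm Jp I Rt.
have pm_range : (0 < pm <= d)%N by lia.
have pp_range : (0 < pp <= d)%N by lia.
have hatv_split (v : int -> 'rV[K]_d.+1) k : general_position v -> hatv v I Rt k =
    (<<[seq v (k + j)%R | j <- Jm]>> :&: <<[seq v (k + j)%R | j <- Jp]>>)%VS.
  by move=> v_gen; rewrite hatv_longR_cat // !bigcap_diagP_aprog.
split; first by rewrite !size_Jset_aprog //; lia.
split; first by move=> n v _ _ v_gen k; rewrite !bigcap_diagP_aprog // hatv_split.
split.
  move=> not_exc j j_in_Jm; apply/negP => j_in_Jp; apply: not_exc.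
  exact: (Jset_meet_exceptional m_gt0 pm_gt0 pp_gt0 d_def disj R0 R_ge0 j_in_Jm).
move=> /(exceptional_aprog m_gt0 pm_gt0 pp_gt0) [q le_qd cases].
have [Jm_q Jp_q] := exceptional_Jset_common m_gt0 le_qd.
subst Jm Jp Rm Rp; case: cases hatv_split => [] [-> -> -> ->] hatv_split.
- split; first by exists (d.-1 * m)%:Z.
  exists (d.-1 * m)%:Z => n v _ _ v_gen k.
  by rewrite hatv_split // exceptional_Jset_capv.
- split; first by exists (d.-1 * m)%:Z.
  exists (d.-1 * m)%:Z => n v _ _ v_gen k.
  by rewrite hatv_split // capvC exceptional_Jset_capv.
Qed.
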